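(* Let $v$ be the linear classifier on $[0,1]^n$ defined by $\vec w\in\mathbb{R}^n$ and $q\in\mathbb{R}$, and let $i\ne j$. If $w_i\ge w_j>0$, then $\chi_i(\vec w;q)\ge\chi_j(\vec w;q)$.
   Context: The linear classifier defined by $\vec w$ and $q$ is $v:[0,1]^n\to\{0,1\}$, $v(\vec x)=1$ iff $\vec x\cdot\vec w\ge q$. For $\vec x\in[0,1]^n$, $b\in[0,1]$, $(\vec x_{-i},b)$ is $\vec x$ with $i$-th coordinate replaced by $b$. $\chi_i(\vec w;q)=\int_0^1\int_{[0,1]^n}|v(\vec x_{-i},b)-v(\vec x)|\,d\vec x\,db$. *)

From Stdlib Require Import Reals Lra Classical ClassicalEpsilon.
Open Scope R_scope.

(* Total 1D Riemann integral on [a,b]: the Riemann integral when f is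
   Riemann integrable on [a,b], and 0 otherwise (the value does not depend
   on the integrability witness, by RiemannInt_P5). *)
Definition Rint (f : R -> R) (a b : R) : R :=
  match excluded_middle_informative (inhabited (Riemann_integrable f a b)) with
  | left H => RiemannInt (epsilon H (fun _ => True))
  | right _ => 0
  end.

(* Points of R^n are represented as x : nat -> R, using coordinates 0..n-1. *)
Definition upd (x : nat -> R) (i : nat) (b : R) : nat -> R :=
  fun k => if Nat.eq_dec k i then b else x k.

(* Integral over the cube [0,1]^n, as an iterated integral over
   coordinates n-1 (outermost), ..., 0 (innermost). *)
Fixpoint cube_int (n : nat) (F : (nat -> R) -> R) : R :=
  match n with
  | O => F (fun _ => 0)
  | S m => Rint (fun t => cube_int m (fun x => F (upd x m t))) 0 1
  end.

Fixpoint dot (n : nat) (x w : nat -> R) : R :=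
  match n with
  | O => 0
  | S m => dot m x w + x m * w m
  end.

Definition classifier (n : nat) (w : nat -> R) (q : R) (x : nat -> R) : R :=
  if Rle_dec q (dot n x w) then 1 else 0.

Definition chi (n : nat) (w : nat -> R) (q : R) (i : nat) : R :=
  Rint (fun b => cube_int n
          (fun x => Rabs (classifier n w q (upd x i b) - classifier n w q x))) 0 1.

(* Write chi_i as an iterated Riemann integral over the coordinates and the resampled value
   [b], kept as an extra coordinate. Its integrand |v(x_{-i}, b) - v(x)| is max - min of two
   half-space indicators that are monotone in every coordinate in a common direction, so it is
   a difference of separately monotone functions. For such integrands the order of
   integration is irrelevant: on the unit square both iterated integrals of a separately
   monotone function are within O(1/N) of the same double left Riemann sum. Hence chi_i and
   chi_j may both be integrated last over the coordinates other than i and j, and it suffices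
   to compare the inner triple integrals. In the one for chi_j, integrating out [b] and x_j
   leaves 2p(1 - p), where the firing probability p is a clamped affine function of x_i of
   slope w_i / w_j; for chi_i the roles of i and j are exchanged. Comparing the averages of
   2c(1 - c), c = clamp01(y), over intervals of lengths w_i / w_j and w_j / w_i reduces to a
   polynomial inequality. *)

From Stdlib Require Import Reals RList Arith Lra Lia ClassicalEpsilon FunctionalExtensionality List Permutation.
From Coquelicot Require Import Coquelicot.
Open Scope R_scope.

(** * Riemann integrability of monotone functions *)

Definition monotone (f : R -> R) : Prop := increasing f \/ decreasing f.

Lemma IsStepFun_ext_open (f g : R -> R) (a b : R) : a <= b ->
  (forall x, a < x < b -> f x = g x) -> IsStepFun f a b -> IsStepFun g a b.
Proof.
  intros Hab Heq [l [lf (Hord & Hmin & Hmax & Hlen & Hconst)]].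
  exists l, lf; repeat split; try assumption.
  intros k Hk x Hx; rewrite <- (Hconst k Hk x Hx); symmetry; apply Heq.
  destruct (RList_P6 l) as [Hsorted _]; specialize (Hsorted Hord).
  assert (pos_Rl l 0 <= pos_Rl l k) by (apply Hsorted; lia).
  assert (pos_Rl l (S k) <= pos_Rl l (pred (length l))) by (apply Hsorted; lia).
  unfold open_interval in Hx; rewrite Hmin, Hmax in *.
  unfold Rmin, Rmax in *; destruct (Rle_dec a b); lra.
Qed.

Lemma RiemannInt_SF_ext_open (a b : R) (s1 s2 : StepFun a b) : a <= b ->
  (forall x, a < x < b -> s1 x = s2 x) -> RiemannInt_SF s1 = RiemannInt_SF s2.
Proof.
  intros Hab H; apply Rle_antisym; apply StepFun_P37; auto;
    intros x Hx; rewrite H; auto; lra.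
Qed.

Definition step_approx (f : R -> R) (a b e : R) : Type :=
  {phi : StepFun a b & {psi : StepFun a b |
    (forall t, a <= t <= b -> Rabs (f t - phi t) <= psi t) /\ RiemannInt_SF psi <= e}}.

Lemma step_approx_Chasles (f : R -> R) (a b c e1 e2 : R) : a <= b -> b <= c ->
  step_approx f a b e1 -> step_approx f b c e2 -> step_approx f a c (e1 + e2).
Proof.
  intros Hab Hbc [phi1 [psi1 [H1 I1]]] [phi2 [psi2 [H2 I2]]].
  set (glue := fun (s1 s2 : R -> R) x => if Rle_dec x b then s1 x else s2 x).
  assert (Hl : forall s1 s2 : R -> R, IsStepFun s1 a b -> IsStepFun (glue s1 s2) a b).
  { intros s1 s2; apply IsStepFun_ext_open; auto.
    intros x Hx; unfold glue; destruct Rle_dec; lra. }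
  assert (Hr : forall s1 s2 : R -> R, IsStepFun s2 b c -> IsStepFun (glue s1 s2) b c).
  { intros s1 s2; apply IsStepFun_ext_open; auto.
    intros x Hx; unfold glue; destruct Rle_dec; lra. }
  pose (Sl := Hl psi1 psi2 (pre psi1)); pose (Sr := Hr psi1 psi2 (pre psi2)).
  exists (mkStepFun (StepFun_P46 (Hl phi1 phi2 (pre phi1)) (Hr phi1 phi2 (pre phi2)))).
  exists (mkStepFun (StepFun_P46 Sl Sr)); split.
  - intros t Ht; simpl; unfold glue; destruct Rle_dec; [apply H1 | apply H2]; lra.
  - rewrite <- (StepFun_P43 Sl Sr).
    rewrite (RiemannInt_SF_ext_open _ _ (mkStepFun Sl) psi1 Hab),
      (RiemannInt_SF_ext_open _ _ (mkStepFun Sr) psi2 Hbc); try lra;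
      intros x Hx; simpl; unfold glue; destruct Rle_dec; auto; lra.
Qed.

Lemma step_approx_const (f : R -> R) (a b D : R) : a <= b -> 0 <= D ->
  (forall t, a <= t <= b -> Rabs (f t - f a) <= D) -> step_approx f a b (D * (b - a)).
Proof.
  intros Hab HD H.
  exists (mkStepFun (StepFun_P4 a b (f a))), (mkStepFun (StepFun_P4 a b D)); split.
  - intros t Ht; simpl; unfold fct_cte; auto.
  - rewrite StepFun_P18; lra.
Qed.

(* On each cell of a grid of mesh [d], approximate by the value at the left end. *)
Lemma step_approx_increasing_grid (f : R -> R) (a d : R) : 0 <= d -> increasing f ->
  forall k : nat, step_approx f a (a + INR k * d) (d * (f (a + INR k * d) - f a)).
Proof.
  intros Hd Hf; induction k as [|k IH].
  - replace (a + INR 0 * d) with a by (simpl; ring).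
    replace (d * (f a - f a)) with (0 * (a - a)) by ring.
    apply step_approx_const; try lra.
    intros t Ht; replace t with a by lra; rewrite Rminus_diag, Rabs_R0; lra.
  - rewrite S_INR; pose proof (pos_INR k).
    set (x := a + INR k * d) in *; set (y := a + (INR k + 1) * d).
    assert (Hxy : x <= y) by (unfold x, y; nra).
    assert (f x <= f y) by auto.
    replace (d * (f y - f a)) with (d * (f x - f a) + (f y - f x) * (y - x))
      by (unfold x, y; ring).
    apply (step_approx_Chasles f a x); auto; [unfold x; nra|].
    apply step_approx_const; auto; [lra|].
    intros t Ht; assert (f x <= f t) by (apply Hf; lra).
    assert (f t <= f y) by (apply Hf; lra).
    rewrite Rabs_right; lra.
Qed.

Lemma RiemannInt_SF_ge0 (a b : R) (s : StepFun a b) : a <= b ->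
  (forall t, a <= t <= b -> 0 <= s t) -> 0 <= RiemannInt_SF s.
Proof.
  intros Hab H.
  pose proof (StepFun_P37 (mkStepFun (StepFun_P4 a b 0)) s Hab) as Hc.
  rewrite StepFun_P18 in Hc; replace 0 with (0 * (b - a)) by ring.
  apply Hc; intros x Hx; simpl; unfold fct_cte; apply H; lra.
Qed.

Lemma Riemann_integrable_increasing (f : R -> R) (a b : R) : a <= b -> increasing f ->
  Riemann_integrable f a b.
Proof.
  intros Hab Hf eps.
  assert (Hfab : f a <= f b) by auto.
  destruct (constructive_indefinite_description _
              (INR_unbounded ((b - a) * (f b - f a) / eps))) as [N HN].
  pose proof (pos_INR N); set (M := INR N + 1); assert (HM : 0 < M) by (unfold M; lra).
  set (d := (b - a) / M).
  assert (Hd : 0 <= d) by (unfold d; apply Rdiv_le_0_compat; lra).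
  pose proof (step_approx_increasing_grid f a d Hd Hf (S N)) as Happrox.
  replace (a + INR (S N) * d) with b in Happrox by (unfold d, M; rewrite S_INR; field; lra).
  destruct Happrox as [phi [psi [H1 H2]]]; exists phi, psi; split.
  - intros t Ht; apply H1; unfold Rmin, Rmax in Ht; destruct (Rle_dec a b); lra.
  - assert (0 <= RiemannInt_SF psi).
    { apply RiemannInt_SF_ge0; auto; intros t Ht.
      eapply Rle_trans; [apply Rabs_pos | apply H1; auto]. }
    rewrite Rabs_right by lra; eapply Rle_lt_trans; [apply H2|].
    pose proof (cond_pos eps).
    apply Rmult_lt_reg_r with (M / eps); [apply Rdiv_lt_0_compat; lra|].
    replace (d * (f b - f a) * (M / eps)) with ((b - a) * (f b - f a) / eps)
      by (unfold d; field; lra).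
    replace (eps * (M / eps)) with M by (field; lra); unfold M; lra.
Qed.

Lemma Riemann_integrable_monotone (f : R -> R) (a b : R) : a <= b -> monotone f ->
  Riemann_integrable f a b.
Proof.
  intros Hab Hf.
  destruct (excluded_middle_informative (increasing f)) as [Hi|Hni].
  - apply Riemann_integrable_increasing; auto.
  - assert (Hd : decreasing f) by (destruct Hf; tauto).
    refine (@RiemannInt.Riemann_integrable_ext (fun x => - - f x) f a b _ _); [intros; ring|].
    apply Riemann_integrable_Ropp, Riemann_integrable_increasing; auto.
    intros x y Hxy; specialize (Hd x y Hxy); lra.
Qed.

Lemma ex_RInt_monotone (f : R -> R) (a b : R) : a <= b -> monotone f -> ex_RInt f a b.
Proof. intros; apply ex_RInt_Reals_1, Riemann_integrable_monotone; auto. Qed.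

Lemma Rint_RInt (f : R -> R) (a b : R) : Riemann_integrable f a b -> Rint f a b = RInt f a b.
Proof.
  intros pr; unfold Rint; destruct excluded_middle_informative as [H|H].
  - apply eq_sym, RInt_Reals.
  - exfalso; apply H; constructor; exact pr.
Qed.

Lemma Rint_RInt_ex (f : R -> R) (a b : R) : ex_RInt f a b -> Rint f a b = RInt f a b.
Proof. intros; apply Rint_RInt, ex_RInt_Reals_0; auto. Qed.

Lemma Rint_monotone (f : R -> R) (a b : R) : a <= b -> monotone f -> Rint f a b = RInt f a b.
Proof. intros; apply Rint_RInt, Riemann_integrable_monotone; auto. Qed.

(** * Fubini's theorem for separately monotone functions on the unit square *)

Fixpoint sum_below (g : nat -> R) (N : nat) : R :=
  match N with O => 0 | S N => sum_below g N + g N end.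

Definition left_sum (g : R -> R) (N : nat) : R :=
  / INR N * sum_below (fun k => g (INR k / INR N)) N.

Lemma sum_below_plus (u v : nat -> R) (N : nat) :
  sum_below (fun k => u k + v k) N = sum_below u N + sum_below v N.
Proof. induction N; simpl; [ring | rewrite IHN; ring]. Qed.

Lemma sum_below_scal (c : R) (u : nat -> R) (N : nat) :
  sum_below (fun k => c * u k) N = c * sum_below u N.
Proof. induction N; simpl; [ring | rewrite IHN; ring]. Qed.

Lemma sum_below_opp (u : nat -> R) (N : nat) :
  sum_below (fun k => - u k) N = - sum_below u N.
Proof. induction N; simpl; [ring | rewrite IHN; ring]. Qed.

Lemma sum_below_swap (F : nat -> nat -> R) (N M : nat) :
  sum_below (fun k => sum_below (F k) M) N = sum_below (fun l => sum_below (fun k => F k l) N) M.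
Proof.
  induction N as [|N IH]; simpl.
  - induction M; simpl; [auto | rewrite <- IHM; ring].
  - rewrite IH, <- sum_below_plus; reflexivity.
Qed.

Lemma sum_below_sub_abs_le (u v : nat -> R) (N : nat) (c : R) :
  (forall k, (k < N)%nat -> Rabs (u k - v k) <= c) ->
  Rabs (sum_below u N - sum_below v N) <= INR N * c.
Proof.
  induction N as [|N IH]; intros H; simpl sum_below.
  - rewrite Rminus_diag, Rabs_R0; simpl; lra.
  - rewrite S_INR.
    replace (sum_below u N + u N - (sum_below v N + v N))
      with ((sum_below u N - sum_below v N) + (u N - v N)) by ring.
    eapply Rle_trans; [apply Rabs_triang|].
    specialize (IH ltac:(auto)); specialize (H N ltac:(lia)); lra.
Qed.

Lemma left_sum_swap (g : R -> R -> R) (N : nat) :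
  left_sum (fun s => left_sum (g s) N) N = left_sum (fun t => left_sum (fun s => g s t) N) N.
Proof.
  unfold left_sum; rewrite <- !sum_below_scal, !sum_below_scal, sum_below_swap.
  rewrite <- !sum_below_scal; reflexivity.
Qed.

Lemma INR_div_unit (k N : nat) : (k < N)%nat -> 0 <= INR k / INR N <= 1.
Proof.
  intros Hk; apply lt_INR in Hk; pose proof (pos_INR k).
  split; [apply Rdiv_le_0_compat; lra|].
  apply Rmult_le_reg_r with (INR N); [lra|]; field_simplify; lra.
Qed.

Lemma left_sum_sub_abs_le (u v : R -> R) (N : nat) (c : R) : (0 < N)%nat ->
  (forall x, 0 <= x <= 1 -> Rabs (u x - v x) <= c) -> Rabs (left_sum u N - left_sum v N) <= c.
Proof.
  intros HN H; assert (HN' : 0 < INR N) by (apply lt_0_INR; auto).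
  unfold left_sum; rewrite <- Rmult_minus_distr_l, Rabs_mult.
  rewrite Rabs_right by (left; apply Rinv_0_lt_compat; auto).
  apply Rmult_le_reg_l with (INR N); auto.
  rewrite <- Rmult_assoc, Rinv_r, Rmult_1_l by lra.
  apply sum_below_sub_abs_le; intros k Hk; apply H, INR_div_unit; auto.
Qed.

Lemma left_sum_error_increasing (g : R -> R) (N : nat) : (0 < N)%nat -> increasing g ->
  forall k, 0 <= RInt g 0 (INR k / INR N) - / INR N * sum_below (fun i => g (INR i / INR N)) k
            <= (g (INR k / INR N) - g 0) / INR N.
Proof.
  intros HN Hg; assert (HN' : 0 < INR N) by (apply lt_0_INR; auto).
  assert (Hm : monotone g) by (left; auto).
  induction k as [|k IH].
  - simpl; replace (0 / INR N) with 0 by (field; lra); rewrite RInt_point.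
    replace ((g 0 - g 0) / INR N) with 0 by (field; lra); unfold zero; simpl; lra.
  - rewrite S_INR; simpl sum_below; pose proof (pos_INR k).
    set (x := INR k / INR N) in *; set (y := (INR k + 1) / INR N).
    assert (Hx : 0 <= x) by (apply Rdiv_le_0_compat; lra).
    assert (Hxy : y - x = / INR N) by (unfold x, y; field; lra).
    assert (Hxy' : x <= y) by (pose proof (Rinv_0_lt_compat _ HN'); lra).
    rewrite <- (RInt_Chasles g 0 x y) by (apply ex_RInt_monotone; auto; lra).
    assert (Lo : / INR N * g x <= RInt g x y).
    { replace (/ INR N * g x) with (RInt (fun _ => g x) x y)
        by (rewrite RInt_const, <- Hxy; reflexivity).
      apply RInt_le; try apply ex_RInt_const; try apply ex_RInt_monotone; auto; try lra.
      intros z Hz; apply Hg; lra. }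
    assert (Hi : RInt g x y <= / INR N * g y).
    { replace (/ INR N * g y) with (RInt (fun _ => g y) x y)
        by (rewrite RInt_const, <- Hxy; reflexivity).
      apply RInt_le; try apply ex_RInt_const; try apply ex_RInt_monotone; auto; try lra.
      intros z Hz; apply Hg; lra. }
    change (plus (RInt g 0 x) (RInt g x y)) with (RInt g 0 x + RInt g x y).
    replace ((g y - g 0) / INR N) with ((g x - g 0) / INR N + / INR N * (g y - g x))
      by (field; lra).
    destruct IH as [IH1 IH2]; rewrite Rmult_plus_distr_l; lra.
Qed.

Lemma left_sum_error_monotone (g : R -> R) (N : nat) : (0 < N)%nat -> monotone g ->
  Rabs (RInt g 0 1 - left_sum g N) <= Rabs (g 1 - g 0) / INR N.
Proof.
  intros HN Hg; assert (HN' : 0 < INR N) by (apply lt_0_INR; auto).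
  assert (E : INR N / INR N = 1) by (field; lra).
  unfold left_sum; destruct Hg as [Hi|Hd].
  - destruct (left_sum_error_increasing g N HN Hi N) as [A B]; rewrite E in A, B.
    assert (g 0 <= g 1) by (apply Hi; lra).
    rewrite !Rabs_right by lra; lra.
  - assert (Hi : increasing (fun x => - g x)) by (intros x y Hxy; specialize (Hd x y Hxy); lra).
    destruct (left_sum_error_increasing _ N HN Hi N) as [A B]; rewrite E in A, B.
    assert (Hopp : RInt (fun x => - g x) 0 1 = - RInt g 0 1)
      by (apply (RInt_opp g 0 1), ex_RInt_monotone; [lra | right; auto]).
    rewrite Hopp, sum_below_opp in A, B.
    assert (g 1 <= g 0) by (apply Hd; lra).
    rewrite !Rabs_left1 by lra.
    apply Rle_trans with ((- g 1 - - g 0) / INR N); [lra | right; field; lra].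
Qed.

Lemma eq0_of_le_div_INR (D C : R) : (forall N : nat, (0 < N)%nat -> Rabs D <= C / INR N) -> D = 0.
Proof.
  intros H; destruct (Req_dec D 0) as [|Hne]; auto; exfalso.
  assert (Hp : 0 < Rabs D) by (apply Rabs_pos_lt; auto).
  destruct (INR_unbounded (Rmax 0 (C / Rabs D))) as [N HN].
  pose proof (Rmax_l 0 (C / Rabs D)); pose proof (Rmax_r 0 (C / Rabs D)).
  assert (HN' : 0 < INR N) by lra.
  specialize (H N (INR_lt 0 N ltac:(simpl; lra))).
  apply Rmult_le_compat_r with (r := INR N) in H; [|lra].
  replace (C / INR N * INR N) with C in H by (field; lra).
  assert (C / Rabs D * Rabs D = C) by (field; lra); nra.
Qed.

Definition monotone_fst (f : R -> R -> R) : Prop :=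
  (forall t, increasing (fun s => f s t)) \/ (forall t, decreasing (fun s => f s t)).

Lemma monotone_fst_at (f : R -> R -> R) (t : R) : monotone_fst f -> monotone (fun s => f s t).
Proof. intros [H|H]; [left | right]; apply H. Qed.

Lemma monotone_fst_RInt (f : R -> R -> R) : monotone_fst f -> monotone_fst (fun t s => f s t) ->
  monotone (fun s => RInt (fun t => f s t) 0 1).
Proof.
  intros Hs Ht.
  assert (Hrow : forall s, ex_RInt (fun t => f s t) 0 1)
    by (intros s; apply ex_RInt_monotone; [lra | exact (monotone_fst_at _ s Ht)]).
  destruct Hs as [H|H]; [left | right]; intros x y Hxy;
    apply RInt_le; auto; try lra; intros t _; apply H; auto.
Qed.

Lemma monotone_abs_le (g : R -> R) (x : R) : monotone g -> 0 <= x <= 1 ->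
  Rabs (g x) <= Rabs (g 0) + Rabs (g 1).
Proof.
  intros [H|H] Hx; [assert (g 0 <= g x <= g 1) | assert (g 1 <= g x <= g 0)];
    try (split; apply H; lra); unfold Rabs; repeat destruct Rcase_abs; lra.
Qed.

Lemma RInt_unit_abs_le (g : R -> R) (B : R) : ex_RInt g 0 1 ->
  (forall t, 0 <= t <= 1 -> Rabs (g t) <= B) -> Rabs (RInt g 0 1) <= B.
Proof.
  intros Hg HB; replace B with ((1 - 0) * B) by ring.
  apply abs_RInt_le_const; auto; lra.
Qed.

(* Outer left-sum error plus the average of the inner left-sum errors. *)
Lemma double_left_sum_error (g : R -> R -> R) (B : R) (N : nat) : (0 < N)%nat ->
  (forall s, monotone (fun t => g s t)) -> monotone (fun s => RInt (fun t => g s t) 0 1) ->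
  (forall s t, 0 <= s <= 1 -> 0 <= t <= 1 -> Rabs (g s t) <= B) ->
  Rabs (RInt (fun s => RInt (fun t => g s t) 0 1) 0 1
        - left_sum (fun s => left_sum (fun t => g s t) N) N) <= 4 * B / INR N.
Proof.
  intros HN Hg HG HB; assert (HN' : 0 < INR N) by (apply lt_0_INR; auto).
  set (G := fun s => RInt (fun t => g s t) 0 1) in *.
  assert (HGB : forall s, 0 <= s <= 1 -> Rabs (G s) <= B).
  { intros s Hs; apply RInt_unit_abs_le; [apply ex_RInt_monotone; auto; lra|].
    intros; apply HB; auto. }
  assert (Outer : Rabs (RInt G 0 1 - left_sum G N) <= 2 * B / INR N).
  { eapply Rle_trans; [apply left_sum_error_monotone; auto|].
    apply Rmult_le_compat_r; [left; apply Rinv_0_lt_compat; auto|].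
    eapply Rle_trans; [apply Rabs_triang|]; rewrite Rabs_Ropp.
    pose proof (HGB 0 ltac:(lra)); pose proof (HGB 1 ltac:(lra)); lra. }
  assert (Inner : Rabs (left_sum G N - left_sum (fun s => left_sum (fun t => g s t) N) N)
                  <= 2 * B / INR N).
  { apply left_sum_sub_abs_le; auto; intros s Hs.
    eapply Rle_trans; [apply left_sum_error_monotone; auto|].
    apply Rmult_le_compat_r; [left; apply Rinv_0_lt_compat; auto|].
    eapply Rle_trans; [apply Rabs_triang|]; rewrite Rabs_Ropp.
    pose proof (HB s 0 Hs ltac:(lra)); pose proof (HB s 1 Hs ltac:(lra)); lra. }
  replace (4 * B / INR N) with (2 * B / INR N + 2 * B / INR N) by (field; lra).
  eapply Rle_trans; [|apply Rplus_le_compat; [apply Outer | apply Inner]].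
  eapply Rle_trans; [|apply Rabs_triang]; right; f_equal; ring.
Qed.

Lemma monotone_fst_square_bound (f : R -> R -> R) :
  monotone_fst f -> monotone_fst (fun t s => f s t) ->
  exists B, forall s t, 0 <= s <= 1 -> 0 <= t <= 1 -> Rabs (f s t) <= B.
Proof.
  intros Hs Ht; exists (Rabs (f 0 0) + Rabs (f 0 1) + Rabs (f 1 0) + Rabs (f 1 1)).
  intros s t Hs01 Ht01.
  eapply Rle_trans; [apply (monotone_abs_le (fun s => f s t)); auto; apply monotone_fst_at; auto|].
  pose proof (monotone_abs_le (fun t => f 0 t) t (monotone_fst_at _ 0 Ht) Ht01).
  pose proof (monotone_abs_le (fun t => f 1 t) t (monotone_fst_at _ 1 Ht) Ht01).
  simpl in *; lra.
Qed.

Lemma Rint_swap_monotone (f : R -> R -> R) :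
  monotone_fst f -> monotone_fst (fun t s => f s t) ->
  Rint (fun s => Rint (fun t => f s t) 0 1) 0 1 = Rint (fun t => Rint (fun s => f s t) 0 1) 0 1.
Proof.
  intros Hs Ht.
  assert (Inner : forall (g : R -> R -> R), monotone_fst (fun t s => g s t) ->
             (fun s => Rint (fun t => g s t) 0 1) = (fun s => RInt (fun t => g s t) 0 1)).
  { intros g Hg; apply functional_extensionality; intros s.
    apply Rint_monotone; [lra | exact (monotone_fst_at _ s Hg)]. }
  rewrite (Inner f Ht), (Inner (fun t s => f s t) Hs).
  rewrite !Rint_monotone by (lra || apply monotone_fst_RInt; auto).
  destruct (monotone_fst_square_bound f Hs Ht) as [B HB].
  apply Rminus_diag_uniq, (eq0_of_le_div_INR _ (8 * B)); intros N HN.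
  assert (HN' : 0 < INR N) by (apply lt_0_INR; auto).
  pose proof (double_left_sum_error f B N HN (fun s => monotone_fst_at _ s Ht)
                (monotone_fst_RInt f Hs Ht) HB) as E1.
  pose proof (double_left_sum_error (fun t s => f s t) B N HN (fun t => monotone_fst_at _ t Hs)
                (monotone_fst_RInt _ Ht Hs) (fun t s Ht01 Hs01 => HB s t Hs01 Ht01)) as E2.
  rewrite <- left_sum_swap in E2.
  eapply Rle_trans; [apply (R_dist_tri _ _ (left_sum (fun s => left_sum (fun t => f s t) N) N))|].
  unfold R_dist; rewrite (Rabs_minus_sym (left_sum _ N)).
  replace (8 * B / INR N) with (4 * B / INR N + 4 * B / INR N) by (field; lra).
  apply Rplus_le_compat; assumption.
Qed.

(** * Iterated integrals over coordinates of separately monotone functions *)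

Lemma upd_eq (x : nat -> R) (k : nat) (s : R) : upd x k s k = s.
Proof. unfold upd; destruct Nat.eq_dec; congruence. Qed.

Lemma upd_neq (x : nat -> R) (k m : nat) (s : R) : m <> k -> upd x k s m = x m.
Proof. intros; unfold upd; destruct Nat.eq_dec; congruence. Qed.

Lemma upd_upd_eq (x : nat -> R) (k : nat) (s t : R) : upd (upd x k s) k t = upd x k t.
Proof. apply functional_extensionality; intros m; unfold upd; destruct Nat.eq_dec; auto. Qed.

Lemma upd_comm (x : nat -> R) (k m : nat) (s t : R) : k <> m ->
  upd (upd x k s) m t = upd (upd x m t) k s.
Proof.
  intros H; apply functional_extensionality; intros p; unfold upd;
    destruct (Nat.eq_dec p m), (Nat.eq_dec p k); congruence.
Qed.

Fixpoint iter_int (l : list nat) (F : (nat -> R) -> R) (z : nat -> R) : R :=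
  match l with
  | nil => F z
  | k :: l' => Rint (fun t => iter_int l' F (upd z k t)) 0 1
  end.

Lemma iter_int_app (l1 l2 : list nat) (F : (nat -> R) -> R) (z : nat -> R) :
  iter_int (l1 ++ l2) F z = iter_int l1 (iter_int l2 F) z.
Proof.
  revert z; induction l1 as [|k l1 IH]; intros z; simpl; auto.
  f_equal; apply functional_extensionality; intros; apply IH.
Qed.

Lemma iter_int_upd (l : list nat) (k : nat) (t : R) (F : (nat -> R) -> R) (z : nat -> R) :
  ~ In k l -> iter_int l (fun x => F (upd x k t)) z = iter_int l F (upd z k t).
Proof.
  revert z; induction l as [|m l IH]; intros z Hk; simpl; auto.
  f_equal; apply functional_extensionality; intros s.
  rewrite IH by (intro; apply Hk; right; auto).
  rewrite upd_comm; auto; intro; apply Hk; left; auto.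
Qed.

Lemma cube_int_iter_int (n : nat) (F : (nat -> R) -> R) :
  cube_int n F = iter_int (rev (seq 0 n)) F (fun _ => 0).
Proof.
  revert F; induction n as [|n IH]; intros F; auto.
  rewrite seq_S, rev_app_distr; simpl.
  f_equal; apply functional_extensionality; intros t.
  rewrite IH; apply iter_int_upd; rewrite <- in_rev, in_seq; lia.
Qed.

Definition monotone_in (k : nat) (up : bool) (F : (nat -> R) -> R) : Prop :=
  forall x s t, s <= t ->
    if up then F (upd x k s) <= F (upd x k t) else F (upd x k t) <= F (upd x k s).

Definition sep_monotone (F : (nat -> R) -> R) : Prop := forall k, exists up, monotone_in k up F.

Lemma monotone_in_slice (k : nat) (up : bool) (F : (nat -> R) -> R) (x : nat -> R) :
  monotone_in k up F -> monotone (fun t => F (upd x k t)).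
Proof. intros H; destruct up; [left | right]; intros s t Hst; apply (H x s t Hst). Qed.

Lemma sep_monotone_slice (F : (nat -> R) -> R) (x : nat -> R) (k : nat) :
  sep_monotone F -> monotone (fun t => F (upd x k t)).
Proof. intros H; destruct (H k) as [up Hup]; eapply monotone_in_slice; eauto. Qed.

Lemma monotone_in_max (k : nat) (up : bool) (F G : (nat -> R) -> R) :
  monotone_in k up F -> monotone_in k up G -> monotone_in k up (fun x => Rmax (F x) (G x)).
Proof.
  intros HF HG x s t Hst; specialize (HF x s t Hst); specialize (HG x s t Hst).
  destruct up; unfold Rmax; repeat destruct Rle_dec; lra.
Qed.

Lemma monotone_in_min (k : nat) (up : bool) (F G : (nat -> R) -> R) :
  monotone_in k up F -> monotone_in k up G -> monotone_in k up (fun x => Rmin (F x) (G x)).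
Proof.
  intros HF HG x s t Hst; specialize (HF x s t Hst); specialize (HG x s t Hst).
  destruct up; unfold Rmin; repeat destruct Rle_dec; lra.
Qed.

(* Integrating out coordinate [k] makes the result constant, hence monotone either way, in [k]. *)
Lemma iter_int_monotone_in (l : list nat) (F : (nat -> R) -> R) : sep_monotone F ->
  forall k up, monotone_in k up F -> monotone_in k up (iter_int l F).
Proof.
  intros HF; induction l as [|m l IH]; simpl; auto; intros k up Hk x s t Hst.
  destruct (Nat.eq_dec m k) as [<-|Hmk].
  - rewrite !(functional_extensionality (fun u => iter_int l F (upd (upd x m _) m u))
                (fun u => iter_int l F (upd x m u))) by (intros; rewrite upd_upd_eq; auto).
    destruct up; lra.
  - assert (Hslice : forall y, monotone (fun u => iter_int l F (upd y m u))).
    { intros y; destruct (HF m) as [upm Hm]; exact (monotone_in_slice _ _ _ y (IH m upm Hm)). }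
    assert (Hpt : forall u, if up
        then iter_int l F (upd (upd x k s) m u) <= iter_int l F (upd (upd x k t) m u)
        else iter_int l F (upd (upd x k t) m u) <= iter_int l F (upd (upd x k s) m u)).
    { intros u; rewrite !(upd_comm x k m) by auto; exact (IH k up Hk _ s t Hst). }
    rewrite !Rint_monotone by (lra || apply Hslice).
    destruct up; apply RInt_le; try lra; try apply ex_RInt_monotone; try lra; try apply Hslice;
      intros u _; apply (Hpt u).
Qed.

Lemma iter_int_sep_monotone (l : list nat) (F : (nat -> R) -> R) :
  sep_monotone F -> sep_monotone (iter_int l F).
Proof.
  intros HF k; destruct (HF k) as [up Hup]; exists up; apply iter_int_monotone_in; auto.
Qed.

Lemma iter_int_sub (l : list nat) (F G : (nat -> R) -> R) (z : nat -> R) :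
  sep_monotone F -> sep_monotone G ->
  iter_int l (fun x => F x - G x) z = iter_int l F z - iter_int l G z.
Proof.
  intros HF HG; revert z; induction l as [|k l IH]; intros z; simpl; auto.
  rewrite (functional_extensionality (fun t => iter_int l (fun x => F x - G x) (upd z k t))
             (fun t => iter_int l F (upd z k t) - iter_int l G (upd z k t))) by (intros; apply IH).
  assert (ExF : ex_RInt (fun t => iter_int l F (upd z k t)) 0 1)
    by (apply ex_RInt_monotone, sep_monotone_slice, iter_int_sep_monotone; auto; lra).
  assert (ExG : ex_RInt (fun t => iter_int l G (upd z k t)) 0 1)
    by (apply ex_RInt_monotone, sep_monotone_slice, iter_int_sep_monotone; auto; lra).
  rewrite Rint_RInt_ex by (apply (ex_RInt_minus _ _ _ _ ExF ExG)).
  rewrite !Rint_RInt_ex by assumption.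
  exact (RInt_minus _ _ 0 1 ExF ExG).
Qed.

Definition sep_monotone_diff (F : (nat -> R) -> R) : Prop :=
  exists F1 F2, sep_monotone F1 /\ sep_monotone F2 /\ forall x, F x = F1 x - F2 x.

Lemma iter_int_sep_monotone_diff (l : list nat) (F : (nat -> R) -> R) :
  sep_monotone_diff F -> sep_monotone_diff (iter_int l F).
Proof.
  intros (F1 & F2 & H1 & H2 & E).
  rewrite (functional_extensionality _ _ E).
  exists (iter_int l F1), (iter_int l F2).
  repeat split; try apply iter_int_sep_monotone; auto.
  intros; apply iter_int_sub; auto.
Qed.

Lemma ex_RInt_sep_monotone_diff (F : (nat -> R) -> R) (x : nat -> R) (k : nat) :
  sep_monotone_diff F -> ex_RInt (fun t => F (upd x k t)) 0 1.
Proof.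
  intros (F1 & F2 & H1 & H2 & E).
  apply (ex_RInt_ext (fun t => F1 (upd x k t) - F2 (upd x k t))); [intros; rewrite E; auto|].
  apply (ex_RInt_minus (fun t => F1 (upd x k t)) (fun t => F2 (upd x k t)));
    apply ex_RInt_monotone; try lra; apply sep_monotone_slice; auto.
Qed.

Lemma iter_int_le (l : list nat) (F G : (nat -> R) -> R) (z : nat -> R) :
  sep_monotone_diff F -> sep_monotone_diff G -> (forall x, F x <= G x) ->
  iter_int l F z <= iter_int l G z.
Proof.
  intros HF HG H; revert z; induction l as [|k l IH]; intros z; simpl; auto.
  pose proof (iter_int_sep_monotone_diff l F HF); pose proof (iter_int_sep_monotone_diff l G HG).
  rewrite !Rint_RInt_ex by (apply ex_RInt_sep_monotone_diff; auto).
  apply RInt_le; try lra; try (apply ex_RInt_sep_monotone_diff; auto); intros; apply IH.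
Qed.

Lemma monotone_in_monotone_fst (G : (nat -> R) -> R) (k : nat) (up : bool) (y : R -> nat -> R) :
  monotone_in k up G -> monotone_fst (fun s t => G (upd (y t) k s)).
Proof. intros H; destruct up; [left | right]; intros t s1 s2 Hs; exact (H (y t) s1 s2 Hs). Qed.

Lemma iter_int_swap (k m : nat) (l : list nat) (F : (nat -> R) -> R) (z : nat -> R) :
  k <> m -> sep_monotone F -> iter_int (k :: m :: l) F z = iter_int (m :: k :: l) F z.
Proof.
  intros Hkm HF; simpl.
  pose proof (iter_int_sep_monotone l F HF) as HG.
  destruct (HG k) as [upk Hk], (HG m) as [upm Hm].
  set (f := fun s t => iter_int l F (upd (upd z m t) k s)).
  transitivity (Rint (fun s => Rint (fun t => f s t) 0 1) 0 1).
  { f_equal; apply functional_extensionality; intros s; f_equal.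
    apply functional_extensionality; intros t; unfold f; rewrite upd_comm; auto. }
  apply Rint_swap_monotone.
  - exact (monotone_in_monotone_fst _ _ _ (fun t => upd z m t) Hk).
  - unfold f; rewrite (functional_extensionality_dep _ (fun t s => iter_int l F (upd (upd z k s) m t)));
      [exact (monotone_in_monotone_fst _ _ _ (fun s => upd z k s) Hm)|].
    intros t; apply functional_extensionality; intros s; rewrite upd_comm; auto.
Qed.

Lemma iter_int_perm_sep_monotone (F : (nat -> R) -> R) (l l' : list nat) :
  sep_monotone F -> Permutation l l' -> NoDup l -> forall z, iter_int l F z = iter_int l' F z.
Proof.
  intros HF HP; induction HP as [|k l l' HP IH|k m l|l l' l'' HP1 IH1 HP2 IH2];
    intros ND z; auto.
  - inversion ND; subst; simpl; f_equal.
    apply functional_extensionality; intros; apply IH; auto.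
  - apply iter_int_swap; auto; intros ->.
    inversion_clear ND as [|? ? Hnotin _]; apply Hnotin; left; reflexivity.
  - rewrite IH1 by auto; apply IH2, (Permutation_NoDup HP1); auto.
Qed.

Lemma iter_int_perm (F : (nat -> R) -> R) (l l' : list nat) (z : nat -> R) :
  sep_monotone_diff F -> Permutation l l' -> NoDup l -> iter_int l F z = iter_int l' F z.
Proof.
  intros (F1 & F2 & H1 & H2 & E) HP ND.
  rewrite (functional_extensionality _ _ E), !iter_int_sub by auto.
  rewrite !(iter_int_perm_sep_monotone _ l l') by auto; reflexivity.
Qed.

(** * The one-dimensional computation *)

Definition clamp01 (y : R) : R := Rmax 0 (Rmin 1 y).

Lemma clamp01_le0 (y : R) : y <= 0 -> clamp01 y = 0.
Proof. unfold clamp01, Rmax, Rmin; repeat destruct Rle_dec; lra. Qed.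

Lemma clamp01_id (y : R) : 0 <= y <= 1 -> clamp01 y = y.
Proof. unfold clamp01, Rmax, Rmin; repeat destruct Rle_dec; lra. Qed.

Lemma clamp01_ge1 (y : R) : 1 <= y -> clamp01 y = 1.
Proof. unfold clamp01, Rmax, Rmin; repeat destruct Rle_dec; lra. Qed.

Lemma clamp01_range (y : R) : 0 <= clamp01 y <= 1.
Proof. unfold clamp01, Rmax, Rmin; repeat destruct Rle_dec; lra. Qed.

Lemma clamp01_lipschitz (x y : R) : Rabs (clamp01 x - clamp01 y) <= Rabs (x - y).
Proof.
  unfold clamp01, Rmax, Rmin; repeat destruct Rle_dec;
    unfold Rabs; repeat destruct Rcase_abs; lra.
Qed.

(* The probability that a uniform variable on [0, 1] is at least [d]. *)
Definition prob_ge_unif (d : R) : R := clamp01 (1 - d).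

(* The probability that two independent Bernoulli([p]) variables differ. *)
Definition disagree (p : R) : R := 2 * p * (1 - p).

Lemma RInt_const_open (f : R -> R) (a b c : R) : a <= b ->
  (forall x, a < x < b -> f x = c) -> ex_RInt f a b /\ RInt f a b = c * (b - a) :> R.
Proof.
  intros Hab H.
  assert (Hopen : forall x, Rmin a b < x < Rmax a b -> c = f x).
  { intros x Hx; rewrite H; auto; unfold Rmin, Rmax in Hx; destruct Rle_dec; lra. }
  split.
  - apply (ex_RInt_ext (fun _ => c)); auto; apply ex_RInt_const.
  - rewrite <- (RInt_ext (fun _ => c)), RInt_const by auto; apply Rmult_comm.
Qed.

Lemma Rint_step (a d X Y : R) : a > 0 ->
  Rint (fun u => if Rle_dec d (a * u) then X else Y) 0 1
  = prob_ge_unif (d / a) * X + (1 - prob_ge_unif (d / a)) * Y.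
Proof.
  intros Ha; set (f := fun u => if Rle_dec d (a * u) then X else Y).
  set (u0 := d / a); assert (Hd : d = a * u0) by (unfold u0; field; lra).
  assert (Hlo : forall x, x < u0 -> f x = Y)
    by (intros x Hx; unfold f; destruct Rle_dec; auto; nra).
  assert (Hhi : forall x, u0 < x -> f x = X)
    by (intros x Hx; unfold f; destruct Rle_dec; auto; nra).
  unfold prob_ge_unif; fold u0.
  assert (Hint : ex_RInt f 0 1 /\ RInt f 0 1 = clamp01 (1 - u0) * X + (1 - clamp01 (1 - u0)) * Y :> R).
  { destruct (Rle_dec u0 0); [|destruct (Rle_dec 1 u0)].
    - destruct (RInt_const_open f 0 1 X) as [E I]; try (intros; apply Hhi); try lra.
      rewrite clamp01_ge1 by lra; split; auto; rewrite I; ring.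
    - destruct (RInt_const_open f 0 1 Y) as [E I]; try (intros; apply Hlo); try lra.
      rewrite clamp01_le0 by lra; split; auto; rewrite I; ring.
    - destruct (RInt_const_open f 0 u0 Y) as [E1 I1]; try (intros; apply Hlo); try lra.
      destruct (RInt_const_open f u0 1 X) as [E2 I2]; try (intros; apply Hhi); try lra.
      split; [apply (ex_RInt_Chasles f 0 u0 1); auto|].
      rewrite <- (RInt_Chasles f 0 u0 1 E1 E2), clamp01_id by lra.
      change (plus (RInt f 0 u0) (RInt f u0 1)) with (RInt f 0 u0 + RInt f u0 1).
      rewrite I1, I2; ring. }
  destruct Hint as [E I]; rewrite Rint_RInt_ex; auto.
Qed.

Definition ind_ge (q v : R) : R := if Rle_dec q v then 1 else 0.

Lemma Rint_Rint_abs_ind_ge (q c a : R) : a > 0 ->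
  Rint (fun m => Rint (fun b => Rabs (ind_ge q (c + a * b) - ind_ge q (c + a * m))) 0 1) 0 1
  = disagree (prob_ge_unif ((q - c) / a)).
Proof.
  intros Ha; set (p := prob_ge_unif ((q - c) / a)).
  assert (Hcut : forall u, ind_ge q (c + a * u) = if Rle_dec (q - c) (a * u) then 1 else 0)
    by (intros u; unfold ind_ge; destruct Rle_dec, Rle_dec; auto; lra).
  rewrite (functional_extensionality
    (fun m => Rint (fun b => Rabs (ind_ge q (c + a * b) - ind_ge q (c + a * m))) 0 1)
    (fun m => if Rle_dec (q - c) (a * m) then 1 - p else p)).
  { rewrite Rint_step by auto; fold p; unfold disagree; ring. }
  intros m; rewrite Hcut.
  rewrite (functional_extensionality
    (fun b => Rabs (ind_ge q (c + a * b) - if Rle_dec (q - c) (a * m) then 1 else 0))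
    (fun b => if Rle_dec (q - c) (a * b)
             then Rabs (1 - if Rle_dec (q - c) (a * m) then 1 else 0)
             else Rabs (0 - if Rle_dec (q - c) (a * m) then 1 else 0)))
    by (intros b; rewrite Hcut; destruct Rle_dec; auto).
  rewrite Rint_step by auto; fold p.
  destruct Rle_dec; rewrite ?Rminus_diag, ?Rminus_0_r, ?Rminus_0_l, ?Rabs_R0, ?Rabs_Ropp, Rabs_R1; ring.
Qed.

Definition disagree_prim (y : R) : R := y ^ 2 - 2 / 3 * y ^ 3.

(* The primitive of [disagree o clamp01] vanishing at [0]. *)
Definition disagree_clamp_prim (y : R) : R := disagree_prim (clamp01 y).

Lemma disagree_prim_scale_le (r g : R) : 0 < r <= 1 -> 0 <= g <= r ->
  r ^ 2 * disagree_prim (g / r) <= disagree_prim g.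
Proof.
  intros Hr Hg; set (t := g / r); assert (Ht : g = r * t) by (unfold t; field; lra).
  assert (0 <= t) by (unfold t; apply Rdiv_le_0_compat; lra).
  rewrite Ht; unfold disagree_prim.
  assert (0 <= r ^ 2 * t ^ 3 * (1 - r))
    by (apply Rmult_le_pos; [apply Rmult_le_pos|]; try apply pow_le; lra).
  nra.
Qed.

Lemma disagree_clamp_prim_le (r g : R) : 0 < r <= 1 ->
  r ^ 2 * (disagree_clamp_prim ((r + g) / r) - disagree_clamp_prim ((r + g - 1) / r))
  <= disagree_clamp_prim (r + g) - disagree_clamp_prim g.
Proof.
  intros Hr; unfold disagree_clamp_prim.
  assert (Hdiv : forall y z, r * z <= y -> z <= y / r)
    by (intros y z H; apply Rmult_le_reg_l with r; [lra|]; field_simplify; lra).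
  assert (Hdiv' : forall y z, y <= r * z -> y / r <= z)
    by (intros y z H; apply Rmult_le_reg_l with r; [lra|]; field_simplify; lra).
  destruct (Rle_dec g (- r)); [|destruct (Rle_dec g 0); [|destruct (Rle_dec g (1 - r))]].
  - rewrite (clamp01_le0 g), (clamp01_le0 (r + g)), (clamp01_le0 ((r + g) / r)),
      (clamp01_le0 ((r + g - 1) / r)); try lra; apply Hdiv'; lra.
  - rewrite (clamp01_le0 g), (clamp01_id (r + g)), (clamp01_id ((r + g) / r)),
      (clamp01_le0 ((r + g - 1) / r)); try lra; try (split; [apply Hdiv | apply Hdiv']; lra);
      [|apply Hdiv'; lra].
    pose proof (disagree_prim_scale_le r (r + g) Hr ltac:(lra)).
    unfold disagree_prim at 2 4; lra.
  - rewrite (clamp01_id g), (clamp01_id (r + g)), (clamp01_ge1 ((r + g) / r)),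
      (clamp01_le0 ((r + g - 1) / r)); try lra; [|apply Hdiv'; lra | apply Hdiv; lra].
    unfold disagree_prim.
    assert (0 <= g * (1 - g - r)) by nra.
    assert (0 <= r * (2 * g * (1 - g - r) + 2 / 3 * r * (1 - r))) by (apply Rmult_le_pos; nra).
    nra.
  - destruct (Rle_dec g 1).
    + rewrite (clamp01_id g), (clamp01_ge1 (r + g)), (clamp01_ge1 ((r + g) / r)),
        (clamp01_id ((r + g - 1) / r)); try lra;
        [|split; [apply Hdiv | apply Hdiv']; lra | apply Hdiv; lra].
      replace ((r + g - 1) / r) with (1 - (1 - g) / r) by (field; lra).
      pose proof (disagree_prim_scale_le r (1 - g) Hr ltac:(lra)).
      unfold disagree_prim in *.
      replace (1 ^ 2 - 2 / 3 * 1 ^ 3 - ((1 - (1 - g) / r) ^ 2 - 2 / 3 * (1 - (1 - g) / r) ^ 3))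
        with (((1 - g) / r) ^ 2 - 2 / 3 * ((1 - g) / r) ^ 3) by (field; lra).
      replace (1 ^ 2 - 2 / 3 * 1 ^ 3 - (g ^ 2 - 2 / 3 * g ^ 3))
        with ((1 - g) ^ 2 - 2 / 3 * (1 - g) ^ 3) by field.
      lra.
    + rewrite (clamp01_ge1 g), (clamp01_ge1 (r + g)), (clamp01_ge1 ((r + g) / r)),
        (clamp01_ge1 ((r + g - 1) / r)); try lra; apply Hdiv; nra.
Qed.

Lemma lipschitz_continuous (f : R -> R) (L : R) : 0 <= L ->
  (forall x y, Rabs (f x - f y) <= L * Rabs (x - y)) -> forall x, continuous f x.
Proof.
  intros HL H x; apply continuity_pt_filterlim, continuity_pt_locally; intros eps.
  assert (Hd : 0 < eps / (L + 1)) by (apply Rdiv_lt_0_compat; [apply cond_pos | lra]).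
  exists (mkposreal _ Hd); intros y Hy; change (Rabs (y - x) < eps / (L + 1)) in Hy.
  eapply Rle_lt_trans; [apply H|].
  apply Rle_lt_trans with ((L + 1) * Rabs (y - x)); [pose proof (Rabs_pos (y - x)); nra|].
  apply Rmult_lt_reg_r with (/ (L + 1)); [apply Rinv_0_lt_compat; lra|].
  replace ((L + 1) * Rabs (y - x) * / (L + 1)) with (Rabs (y - x)) by (field; lra).
  exact Hy.
Qed.

Lemma disagree_clamp01_lipschitz (x y : R) :
  Rabs (disagree (clamp01 x) - disagree (clamp01 y)) <= 2 * Rabs (x - y).
Proof.
  pose proof (clamp01_lipschitz x y); pose proof (clamp01_range x); pose proof (clamp01_range y).
  unfold disagree; set (c1 := clamp01 x) in *; set (c2 := clamp01 y) in *.
  replace (2 * c1 * (1 - c1) - 2 * c2 * (1 - c2)) with (2 * ((c1 - c2) * (1 - c1 - c2))) by ring.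
  rewrite !Rabs_mult, (Rabs_right 2) by lra.
  assert (Rabs (1 - c1 - c2) <= 1) by (unfold Rabs; destruct Rcase_abs; lra).
  pose proof (Rabs_pos (c1 - c2)); pose proof (Rabs_pos (1 - c1 - c2)); nra.
Qed.

Lemma ex_RInt_disagree_clamp01 (a b : R) : ex_RInt (fun y => disagree (clamp01 y)) a b.
Proof.
  apply (@ex_RInt_continuous R_CompleteNormedModule); intros.
  apply (lipschitz_continuous _ 2); [lra | apply disagree_clamp01_lipschitz].
Qed.

Lemma RInt_disagree_clamp01_from0 (y : R) :
  RInt (fun y => disagree (clamp01 y)) 0 y = disagree_clamp_prim y :> R.
Proof.
  set (h := fun y => disagree (clamp01 y)).
  assert (Hzero : forall a b, (forall x, Rmin a b < x < Rmax a b -> h x = 0) -> RInt h a b = 0 :> R).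
  { intros a b H; rewrite (RInt_ext h (fun _ => 0)), RInt_const by auto.
    change (scal (b - a) 0) with ((b - a) * 0); ring. }
  assert (Hpoly : forall z, 0 <= z <= 1 -> RInt h 0 z = disagree_prim z :> R).
  { intros z Hz; rewrite (RInt_ext h (fun t => 2 * t * (1 - t))).
    - apply is_RInt_unique.
      replace (disagree_prim z) with (minus (disagree_prim z) (disagree_prim 0))
        by (unfold minus, plus, opp, disagree_prim; simpl; field).
      apply (is_RInt_derive disagree_prim (fun t => 2 * t * (1 - t))).
      + intros x _; unfold disagree_prim; auto_derive; auto; field.
      + intros x _; apply (@ex_derive_continuous R_AbsRing R_NormedModule); auto_derive; auto.
    - intros x Hx; unfold Rmin, Rmax in Hx; destruct Rle_dec; try lra.
      unfold h, disagree; rewrite clamp01_id by lra; reflexivity. }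
  unfold disagree_clamp_prim; destruct (Rle_dec y 0); [|destruct (Rle_dec y 1)].
  - rewrite Hzero; [rewrite clamp01_le0 by lra; unfold disagree_prim; field|].
    intros x Hx; unfold Rmin, Rmax in Hx; destruct Rle_dec; try lra.
    unfold h, disagree; rewrite clamp01_le0 by lra; ring.
  - rewrite Hpoly, clamp01_id by lra; reflexivity.
  - rewrite <- (RInt_Chasles h 0 1 y) by apply ex_RInt_disagree_clamp01.
    rewrite Hpoly by lra; rewrite (Hzero 1 y).
    + rewrite clamp01_ge1 by lra; change (plus (disagree_prim 1) 0) with (disagree_prim 1 + 0); ring.
    + intros x Hx; unfold Rmin, Rmax in Hx; destruct Rle_dec; try lra.
      unfold h, disagree; rewrite clamp01_ge1 by lra; ring.
Qed.

Lemma Rint_disagree_clamp01_affine (k m : R) : k > 0 ->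
  Rint (fun u => disagree (clamp01 (k * u + m))) 0 1
  = / k * (disagree_clamp_prim (k + m) - disagree_clamp_prim m).
Proof.
  intros Hk; set (h := fun y => disagree (clamp01 y)).
  change (Rint (fun u => h (k * u + m)) 0 1
          = / k * (disagree_clamp_prim (k + m) - disagree_clamp_prim m)).
  assert (Hex : ex_RInt (fun u => h (k * u + m)) 0 1).
  { apply (@ex_RInt_continuous R_CompleteNormedModule); intros z _.
    apply (lipschitz_continuous _ (2 * k)); [lra|]; intros x y.
    eapply Rle_trans; [apply disagree_clamp01_lipschitz|].
    replace (k * x + m - (k * y + m)) with (k * (x - y)) by ring.
    rewrite Rabs_mult, Rabs_right by lra; lra. }
  rewrite Rint_RInt_ex by exact Hex.
  pose proof (RInt_comp_lin h k m 0 1 (ex_RInt_disagree_clamp01 _ _)) as Hlin.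
  rewrite (RInt_scal (fun u => h (k * u + m))) in Hlin by exact Hex.
  change (scal k (RInt (fun u => h (k * u + m)) 0 1))
    with (k * RInt (fun u => h (k * u + m)) 0 1) in Hlin.
  rewrite <- (RInt_Chasles h _ 0), <- (opp_RInt_swap h 0), !RInt_disagree_clamp01_from0 in Hlin
    by apply ex_RInt_disagree_clamp01.
  change (plus (opp (disagree_clamp_prim (k * 0 + m))) (disagree_clamp_prim (k * 1 + m)))
    with (- disagree_clamp_prim (k * 0 + m) + disagree_clamp_prim (k * 1 + m)) in Hlin.
  replace (k * 0 + m) with m in Hlin by ring; replace (k * 1 + m) with (k + m) in Hlin by ring.
  apply (Rmult_eq_reg_l k); [rewrite Hlin; field|]; lra.
Qed.

(* Both sides are averages of [disagree o clamp01] over intervals of lengths [a / e] and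
   [e / a]; the comparison is [disagree_clamp_prim_le] with [r = e / a]. *)
Lemma Rint_disagree_prob_le (c a e : R) : a >= e -> e > 0 ->
  Rint (fun u => disagree (prob_ge_unif ((c - a * u) / e))) 0 1
  <= Rint (fun v => disagree (prob_ge_unif ((c - e * v) / a))) 0 1.
Proof.
  intros Hae He; unfold prob_ge_unif.
  rewrite (functional_extensionality (fun u => disagree (clamp01 (1 - (c - a * u) / e)))
             (fun u => disagree (clamp01 (a / e * u + (1 - c / e))))) by (intros; do 2 f_equal; field; lra).
  rewrite (functional_extensionality (fun v => disagree (clamp01 (1 - (c - e * v) / a)))
             (fun v => disagree (clamp01 (e / a * v + (1 - c / a))))) by (intros; do 2 f_equal; field; lra).
  rewrite !Rint_disagree_clamp01_affine by (apply Rdiv_lt_0_compat; lra).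
  set (r := e / a); set (g := 1 - c / a).
  assert (Hr : 0 < r <= 1).
  { unfold r; split; [apply Rdiv_lt_0_compat; lra|].
    apply Rmult_le_reg_r with a; [lra|]; field_simplify; lra. }
  replace (a / e + (1 - c / e)) with ((r + g) / r) by (unfold r, g; field; lra).
  replace (1 - c / e) with ((r + g - 1) / r) by (unfold r, g; field; lra).
  replace (/ (a / e)) with r by (unfold r; field; lra).
  pose proof (disagree_clamp_prim_le r g Hr) as H.
  apply Rmult_le_reg_l with r; [lra|].
  replace (r * (/ r * (disagree_clamp_prim (r + g) - disagree_clamp_prim g)))
    with (disagree_clamp_prim (r + g) - disagree_clamp_prim g) by (field; lra).
  lra.
Qed.

(** * The resampling integrand of a linear classifier *)

Lemma dot_upd (n : nat) (x w : nat -> R) (k : nat) (s : R) :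
  dot n (upd x k s) w = dot n x w + (if lt_dec k n then w k * (s - x k) else 0).
Proof.
  induction n as [|m IH]; simpl.
  - destruct (lt_dec k 0); [lia | ring].
  - rewrite IH; unfold upd.
    destruct (Nat.eq_dec m k), (lt_dec k m), (lt_dec k (S m)); subst; try lia; ring.
Qed.

Lemma dot_upd_ge (n : nat) (x w : nat -> R) (k : nat) (s : R) :
  (n <= k)%nat -> dot n (upd x k s) w = dot n x w.
Proof. intros; rewrite dot_upd; destruct lt_dec; [lia | ring]. Qed.

Lemma Rabs_sub_max_min (a b : R) : Rabs (a - b) = Rmax a b - Rmin a b.
Proof. unfold Rmax, Rmin; destruct Rle_dec; unfold Rabs; destruct Rcase_abs; lra. Qed.

Lemma monotone_in_ind_ge (D : (nat -> R) -> R) (k : nat) (a c q : R) :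
  (forall x s, D (upd x k s) = D x + a * (s - x k)) -> a = 0 \/ a = c ->
  monotone_in k (if Rle_dec 0 c then true else false) (fun x => ind_ge q (D x)).
Proof.
  intros HD Ha x s t Hst; rewrite !HD.
  destruct Rle_dec; unfold ind_ge; repeat destruct Rle_dec; try lra;
    destruct Ha as [-> | ->]; nra.
Qed.

Section Resampling.

Variables (n : nat) (w : nat -> R) (q : R).

(* The resampled value [b] of coordinate [i] is kept in the spare coordinate [n], which
   [dot n] ignores. *)
Definition resample_gap (i : nat) (x : nat -> R) : R :=
  Rabs (classifier n w q (upd x i (x n)) - classifier n w q x).

Lemma dot_resample (i : nat) (x : nat -> R) : (i < n)%nat ->
  dot n (upd x i (x n)) w = dot n x w + w i * (x n - x i).
Proof. intros; rewrite dot_upd; destruct lt_dec; [ring | lia]. Qed.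

(* The two indicators move in the same direction along every coordinate, namely that of
   the sign of the weight of [i] for the spare coordinate and of [k] otherwise. *)
Lemma resample_gap_sep_monotone_diff (i : nat) : (i < n)%nat -> sep_monotone_diff (resample_gap i).
Proof.
  intros Hi.
  set (before := fun x => classifier n w q x).
  set (after := fun x => classifier n w q (upd x i (x n))).
  assert (Hdir : forall k, exists up, monotone_in k up after /\ monotone_in k up before).
  { intros k; set (c := w (if Nat.eq_dec k n then i else k)).
    exists (if Rle_dec 0 c then true else false); split.
    - apply (monotone_in_ind_ge (fun x => dot n (upd x i (x n)) w) k
        (if Nat.eq_dec k n then w i else if Nat.eq_dec k i then 0
         else if lt_dec k n then w k else 0)).
      + intros x s; rewrite !dot_resample, dot_upd by auto; unfold upd.
        destruct (Nat.eq_dec n k), (Nat.eq_dec i k), (Nat.eq_dec k n), (Nat.eq_dec k i),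
          (lt_dec k n); subst; try lia; ring.
      + unfold c; destruct (Nat.eq_dec k n), (Nat.eq_dec k i), (lt_dec k n); auto.
    - apply (monotone_in_ind_ge (fun x => dot n x w) k (if lt_dec k n then w k else 0)).
      + intros x s; rewrite dot_upd; destruct lt_dec; ring.
      + unfold c; destruct (Nat.eq_dec k n), (lt_dec k n); auto; lia. }
  exists (fun x => Rmax (after x) (before x)), (fun x => Rmin (after x) (before x)).
  repeat split.
  - intros k; destruct (Hdir k) as [up [Ha Hb]]; exists up; apply monotone_in_max; auto.
  - intros k; destruct (Hdir k) as [up [Ha Hb]]; exists up; apply monotone_in_min; auto.
  - intros x; apply Rabs_sub_max_min.
Qed.

Lemma chi_iter_int (i : nat) : (i < n)%nat ->
  chi n w q i = iter_int (n :: rev (seq 0 n)) (resample_gap i) (fun _ => 0).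
Proof.
  intros Hi; unfold chi; simpl; f_equal; apply functional_extensionality; intros b.
  rewrite cube_int_iter_int, <- iter_int_upd by (rewrite <- in_rev, in_seq; lia).
  f_equal; apply functional_extensionality; intros x.
  unfold resample_gap, classifier; rewrite upd_eq, (upd_comm x n i) by lia.
  rewrite (dot_upd_ge n (upd x i b) w n b), (dot_upd_ge n x w n b) by lia; reflexivity.
Qed.

(* Integrating out the spare coordinate and coordinate [k] leaves the disagreement
   probability of the two indicators, a function of the remaining coordinate [o]. *)
Lemma iter_int_resample_gap (o k : nat) (z : nat -> R) :
  (o < n)%nat -> (k < n)%nat -> o <> k -> w k > 0 ->
  iter_int (o :: k :: n :: nil) (resample_gap k) z
  = Rint (fun u => disagree (prob_ge_unif
             ((q - (dot n z w - w o * z o - w k * z k) - w o * u) / w k))) 0 1.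
Proof.
  intros Ho Hk Hok Hwk; set (C := dot n z w - w o * z o - w k * z k); simpl.
  f_equal; apply functional_extensionality; intros u.
  replace (q - C - w o * u) with (q - (C + w o * u)) by ring.
  rewrite <- (Rint_Rint_abs_ind_ge q (C + w o * u) (w k) Hwk).
  f_equal; apply functional_extensionality; intros v.
  f_equal; apply functional_extensionality; intros b.
  set (y := upd (upd (upd z o u) k v) n b).
  assert (Hdot : dot n y w = C + w o * u + w k * v).
  { unfold y; rewrite dot_upd_ge, !dot_upd by lia.
    rewrite upd_neq by auto.
    repeat destruct lt_dec; try lia; unfold C; ring. }
  unfold resample_gap, classifier.
  rewrite dot_resample, Hdot by auto.
  replace (y n) with b by (unfold y; rewrite upd_eq; auto).
  replace (y k) with v by (unfold y; rewrite upd_neq, upd_eq by lia; auto).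
  replace (C + w o * u + w k * v + w k * (b - v)) with (C + w o * u + w k * b) by ring.
  reflexivity.
Qed.

Lemma iter_int_resample_gap_le (i j : nat) (z : nat -> R) :
  (i < n)%nat -> (j < n)%nat -> i <> j -> w i >= w j -> w j > 0 ->
  iter_int (i :: j :: n :: nil) (resample_gap j) z
  <= iter_int (j :: i :: n :: nil) (resample_gap i) z.
Proof.
  intros Hi Hj Hij Hw Hwj.
  rewrite !iter_int_resample_gap by (auto || lra).
  replace (dot n z w - w j * z j - w i * z i) with (dot n z w - w i * z i - w j * z j) by ring.
  apply Rint_disagree_prob_le; auto.
Qed.

End Resampling.

Definition coords_except (n i j : nat) : list nat :=
  filter (fun k => andb (negb (Nat.eqb k i)) (negb (Nat.eqb k j))) (rev (seq 0 n)).

Lemma NoDup_all_coords (n : nat) : NoDup (n :: rev (seq 0 n)).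
Proof.
  constructor; [rewrite <- in_rev, in_seq; lia|].
  apply NoDup_rev, seq_NoDup.
Qed.

Lemma Permutation_coords_except (n i j a b : nat) : (i < n)%nat -> (j < n)%nat -> i <> j ->
  (a = i /\ b = j) \/ (a = j /\ b = i) ->
  Permutation (n :: rev (seq 0 n)) (coords_except n i j ++ a :: b :: n :: nil).
Proof.
  intros Hi Hj Hij Hab.
  assert (Hin : forall k, In k (coords_except n i j) <-> (k < n /\ k <> i /\ k <> j)%nat).
  { intros k; unfold coords_except; rewrite filter_In, <- in_rev, in_seq.
    destruct (Nat.eqb_spec k i), (Nat.eqb_spec k j); simpl; intuition lia. }
  apply NoDup_Permutation; [apply NoDup_all_coords | |].
  - apply NoDup_app; [apply NoDup_filter, NoDup_rev, seq_NoDup | |].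
    + repeat constructor; simpl; lia.
    + intros x Hx; rewrite Hin in Hx; simpl; lia.
  - intros x; rewrite in_app_iff, Hin; simpl; rewrite <- in_rev, in_seq; lia.
Qed.

Theorem mainTheorem10 (n : nat) (w : nat -> R) (q : R) (i j : nat) :
  (i < n)%nat -> (j < n)%nat -> i <> j ->
  w i >= w j -> w j > 0 ->
  chi n w q i >= chi n w q j.
Proof.
  intros Hi Hj Hij Hw Hwj; apply Rle_ge.
  rewrite !chi_iter_int by auto.
  rewrite (iter_int_perm _ _ _ _ (resample_gap_sep_monotone_diff n w q i Hi)
             (Permutation_coords_except n i j j i Hi Hj Hij ltac:(auto)) (NoDup_all_coords n)).
  rewrite (iter_int_perm _ _ _ _ (resample_gap_sep_monotone_diff n w q j Hj)
             (Permutation_coords_except n i j i j Hi Hj Hij ltac:(auto)) (NoDup_all_coords n)).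
  rewrite !iter_int_app; apply iter_int_le;
    try (apply iter_int_sep_monotone_diff, resample_gap_sep_monotone_diff; auto).
  intros z; apply iter_int_resample_gap_le; auto.
Qed.
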